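(* For each $\mathbf b\in\mathcal B$ let $\xi_{\mathbf b}:S\to\mathbb C[[\lambda]]$ be the $\mathbb C[\lambda]$-linear map with $\xi_{\mathbf b}(x^u)=G^{(\mathbf b)}_u(\lambda)$ for $u\in M$. Then each $\xi_{\mathbf b}$ vanishes on $\sum_{i=1}^n D_iS$ and induces a $\mathcal D$-module homomorphism $\mathcal W\to\mathbb C[[\lambda]]$, and the set $\{\xi_{\mathbf b}\}_{\mathbf b\in\mathcal B}$ is a basis of the $\mathbb C$-vector space $\mathrm{Hom}_{\mathcal D}(\mathcal W,\mathbb C[[\lambda]])$.
   Context: Let $A=\{\mathbf a_1,\dots,\mathbf a_m\}\subseteq\mathbb Z^n$ be linearly independent over $\mathbb R$, $\mathbf a_0\in\mathbb Z^n$, and $\ell_0,\ell_1,\dots,\ell_m$ positive integers with greatest common divisor $1$ such that $\ell_0\mathbf a_0=\sum_{j=1}^m\ell_j\mathbf a_j$ and $\ell_0=\sum_{j=1}^m\ell_j$. Write $\mathbf a_j=(a_{1j},\dots,a_{nj})$ and $x^u=x_1^{u_1}\cdots x_n^{u_n}$. Let $f_\lambda=\sum_{j=1}^m\ell_jx^{\mathbf a_j}-\ell_0\lambda x^{\mathbf a_0}$ with $\lambda$ an indeterminate. Let $V$ be the real span of $A$, $V_{\mathbb Z}=V\cap\mathbb Z^n$, $C(A)$ the closed real cone generated by $A$, $M=V_{\mathbb Z}\cap C(A)$. Let $S$ be the free $\mathbb C[\lambda]$-module with basis $\{x^u:u\in M\}$ (a $\mathbb C[\lambda]$-subalgebra of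 $\mathbb C[\lambda][x_1^{\pm1},\dots,x_n^{\pm1}]$). Let $D_i=x_i\partial/\partial x_i+x_i\partial f_\lambda/\partial x_i$ ($i=1,\dots,n$) and $D_\lambda=\partial/\partial\lambda-\ell_0x^{\mathbf a_0}$, operators on $S$. Let $\mathcal D=\mathbb C[\lambda]\langle\partial_\lambda\rangle$; $S$ and $\mathcal W=S/\sum_{i=1}^nD_iS$ are left $\mathcal D$-modules with $\partial_\lambda$ acting as $D_\lambda$; $\mathbb C[[\lambda]]$ is a left $\mathcal D$-module with $\partial_\lambda=d/d\lambda$. Let $P(A)=\{\sum_j c_j\mathbf a_j:0\le c_j<1\}$ and $\mathcal B=V_{\mathbb Z}\cap P(A)$. For $\mathbf b\in\mathcal B$ write uniquely $\mathbf b=\sum_{j=1}^m v_j\mathbf a_j$ with $v_j\in[0,1)\cap\mathbb Q$. For $z\in\mathbb C$, $l\in\mathbb Z$ set $[z]_0=1$, $[z]_l=1/((z+1)(z+2)\cdots(z+l))$ for $l>0$, and $[z]_l=z(z-1)\cdots(z+l+1)$ for $l<0$. For $u\in M$ put $g^{(\mathbf b)}_u=\prod_{j=1}^m[-v_j]_{s_j}\ell_j^{s_j}$ if $u=\sum_{j=1}^m(v_j-s_j)\mathbf a_j$ with all $s_j\in\mathbb Z_{\le0}$, and $g^{(\mathbf b)}_u=0$ otherwise. Define $G^{(\mathbf b)}_u(\lambda)=\sum_{s\ge0}g^{(\mathbf b)}_{u+s\mathbf a_0}\frac{(-\ell_0\lambda)^s}{s!}\in\mathbb C[[\lambda]]$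 (equivalently $\sum_u G^{(\mathbf b)}_u x^{-u}$ is the part of $\exp(-\ell_0\lambda x^{\mathbf a_0})\sum_u g^{(\mathbf b)}_ux^{-u}$ supported on monomials $x^{-u}$, $u\in M$). *)

(* C is an arbitrary numClosedFieldType (e.g. the complex
   numbers); "real" means [\is Num.real]. *)
From HB Require Import structures.
From mathcomp Require Import all_boot all_order all_algebra.
From mathcomp Require Import finmap.
From mathcomp.multinomials Require Import monalg.
From Stdlib Require Import ClassicalEpsilon.

Set Implicit Arguments.
Unset Strict Implicit.
Unset Printing Implicit Defensive.

Import Order.TTheory GRing.Theory Num.Theory.
Local Open Scope ring_scope.

Definition pseries (C : numClosedFieldType) := nat -> C.

(* action of a polynomial p in C[lambda] on a power series (Cauchy product) *)
Definition pscale (C : numClosedFieldType) (p : {poly C}) (F : pseries C)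
  : pseries C := fun k => \sum_(i < k.+1) p`_i * F (k - i)%N.

Definition psadd (C : numClosedFieldType) (F H : pseries C) : pseries C :=
  fun k => F k + H k.

Definition psderiv (C : numClosedFieldType) (F : pseries C) : pseries C :=
  fun k => F k.+1 * k.+1%:R.

Definition brk (C : numClosedFieldType) (z : C) (l : int) : C :=
  match l with
  | Posz k => (\prod_(i < k) (z + i.+1%:R))^-1
  | Negz k => \prod_(i < k.+1) (z - i%:R)
  end.

(* The ambient module: finitely supported families of elements of C[lambda]
   indexed by exponents u in Z^n, i.e. sums  sum_u p_u(lambda) x^u.         *)
Definition Lpoly (C : numClosedFieldType) (n : nat) :=
  {malg {poly C}['rV[int]_n]}.

Section Setting.
Variable C : numClosedFieldType.
Variables n m : nat.
Variable a : 'I_m -> 'rV[int]_n.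
Variable a0 : 'rV[int]_n.
Variable l : 'I_m -> nat.
Variable l0 : nat.

Definition is_comb (c : 'I_m -> C) (u : 'rV[int]_n) : Prop :=
  forall i : 'I_n, (u ord0 i)%:~R = \sum_(j < m) c j * (a j ord0 i)%:~R.

Definition lin_indep_real : Prop :=
  forall c : 'I_m -> C, (forall j, c j \is Num.real) ->
    (forall i : 'I_n, \sum_(j < m) c j * (a j ord0 i)%:~R = 0) ->
    forall j, c j = 0.

Definition inV (u : 'rV[int]_n) : Prop :=
  exists c : 'I_m -> C, (forall j, c j \is Num.real) /\ is_comb c u.

Definition inCone (u : 'rV[int]_n) : Prop :=
  exists c : 'I_m -> C, (forall j, c j \is Num.real /\ 0 <= c j) /\ is_comb c u.

Definition inM (u : 'rV[int]_n) : Prop := inV u /\ inCone u.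

Definition PA_coeffs (b : 'rV[int]_n) (c : 'I_m -> C) : Prop :=
  (forall j, c j \is Num.real /\ 0 <= c j < 1) /\ is_comb c b.

Definition inB (b : 'rV[int]_n) : Prop := inV b /\ exists c, PA_coeffs b c.

Definition vB (b : 'rV[int]_n) : 'I_m -> C :=
  match excluded_middle_informative (exists c, PA_coeffs b c) with
  | left h => proj1_sig (constructive_indefinite_description _ h)
  | right _ => fun _ => 0
  end.

Definition s_data (b u : 'rV[int]_n) (s : 'I_m -> int) : Prop :=
  (forall j, s j <= 0) /\ is_comb (fun j => vB b j - (s j)%:~R) u.

Definition gcoef (b u : 'rV[int]_n) : C :=
  match excluded_middle_informative (exists s, s_data b u s) with
  | left h =>
      let s := proj1_sig (constructive_indefinite_description _ h) in
      \prod_(j < m) (brk (- vB b j) (s j) * (l j)%:R ^ (s j))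
  | right _ => 0
  end.

Definition Gser (b u : 'rV[int]_n) : pseries C :=
  fun k => gcoef b (u + a0 *+ k) * (- l0%:R) ^+ k / (k`!)%:R.

Definition inS (s : Lpoly C n) : Prop := forall u, u \in msupp s -> inM u.

(* D_i = x_i d/dx_i + x_i (d f_lambda / d x_i),
   f_lambda = sum_j l_j x^{a_j} - l0 lambda x^{a0} *)
Definition Dx (i : 'I_n) (s : Lpoly C n) : Lpoly C n :=
  \sum_(u <- msupp s)
    ( << (u ord0 i)%:~R * s@_u *g u >>
    + \sum_(j < m) << ((l j)%:Z * a j ord0 i)%:~R * s@_u *g (u + a j) >>
    - << ((l0)%:Z * a0 ord0 i)%:~R * ('X * s@_u) *g (u + a0) >> ).

Definition Dlam (s : Lpoly C n) : Lpoly C n :=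
  \sum_(u <- msupp s)
    ( << (s@_u)^`() *g u >> - << l0%:R * s@_u *g (u + a0) >> ).

Definition xi (b : 'rV[int]_n) (s : Lpoly C n) : pseries C :=
  fun k => \sum_(u <- msupp s) pscale (s@_u) (Gser b u) k.

(* phi (restricted to S) is a D-module homomorphism W -> C[[lambda]],
   W = S / sum_i D_i S: C[lambda]-linear on S, vanishing on every D_i S,
   and commuting with the action of d/d lambda. *)
Definition isDhom (phi : Lpoly C n -> pseries C) : Prop :=
  [/\ forall (p : {poly C}) s t, inS s -> inS t ->
        forall k, phi (p *: s + t) k = psadd (pscale p (phi s)) (phi t) k,
      forall i s, inS s -> forall k, phi (Dx i s) k = 0
    & forall s, inS s -> forall k, phi (Dlam s) k = psderiv (phi s) k].

End Setting.

From HB Require Import structures.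
From mathcomp Require Import all_boot all_order all_algebra.
From mathcomp Require Import finmap.
From mathcomp.multinomials Require Import monalg.
From Stdlib Require Import ClassicalEpsilon.
From mathcomp Require Import ring zify.

Set Implicit Arguments.
Unset Strict Implicit.
Unset Printing Implicit Defensive.

Import Order.TTheory GRing.Theory Num.Theory.
Local Open Scope ring_scope.

(* Both [xi b] and an arbitrary D-homomorphism [phi] are C[lambda]-linear
   extensions of their values on monomials.  Compatibility with d/dlambda forces
   the values on [x^u] to be [c_(u + k a0) (-l0)^k / k!] with [c_w] the constant
   term on [x^w], and vanishing on [D_i x^w] is, by independence of the [a_j],
   the recursion [t_q c_w + l_q c_(w + a_q) = 0] where [t] are the cone coordinates
   of [w].  The coefficients [g^(b)] solve this recursion, which is how [xi b]
   kills [D_i S].  A solution vanishing on [B] vanishes on [M], by induction on the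
   coordinate sum (stepping from [w] down to [w - a_q] when [t_q >= 1]); hence
   [c = sum_b c_b g^(b)] and [phi = sum_b c_b xi_b].  Independence follows from
   [xi_b(x^b') = delta_(b b')] at [lambda = 0]. *)

Section PowerSeries.
Variable C : numClosedFieldType.
Implicit Types (p q : {poly C}) (F G : pseries C).

Definition pstrunc (K : nat) F : {poly C} := \poly_(i < K.+1) F i.

Lemma pscale_truncE p F k K : (k <= K)%N -> pscale p F k = (p * pstrunc K F)`_k.
Proof.
move=> leK; rewrite coefM; apply: eq_bigr => i _.
by rewrite coef_poly ifT // ltnS (leq_trans (leq_subr _ _) leK).
Qed.

Lemma eq_pscale p F G k : (forall j, (j <= k)%N -> F j = G j) ->
  pscale p F k = pscale p G k.
Proof. by move=> eqFG; apply: eq_bigr => i _; rewrite eqFG // leq_subr. Qed.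

Lemma pscaleDl p q F k : pscale (p + q) F k = pscale p F k + pscale q F k.
Proof. by rewrite /pscale -big_split; apply: eq_bigr => i _; rewrite coefD mulrDl. Qed.

Lemma pscaleNl p F k : pscale (- p) F k = - pscale p F k.
Proof. by rewrite /pscale -sumrN; apply: eq_bigr => i _; rewrite coefN mulNr. Qed.

Lemma pscaleDr p F G k :
  pscale p (fun j => F j + G j) k = pscale p F k + pscale p G k.
Proof. by rewrite /pscale -big_split; apply: eq_bigr => i _; rewrite mulrDr. Qed.

Lemma pscaleNr p F k : pscale p (fun j => - F j) k = - pscale p F k.
Proof. by rewrite /pscale -sumrN; apply: eq_bigr => i _; rewrite mulrN. Qed.

Lemma pscale0r p k : pscale p (fun _ => 0) k = 0.
Proof. by rewrite /pscale big1 // => i _; rewrite mulr0. Qed.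

Lemma pscaleZr p c F k : pscale p (fun j => c * F j) k = c * pscale p F k.
Proof. by rewrite /pscale mulr_sumr; apply: eq_bigr => i _; rewrite mulrCA. Qed.

Lemma pscale_sumr p (I : Type) (r : seq I) (P : pred I) (Fs : I -> pseries C) k :
  pscale p (fun j => \sum_(i <- r | P i) Fs i j) k =
  \sum_(i <- r | P i) pscale p (Fs i) k.
Proof. by rewrite /pscale; under eq_bigr do rewrite mulr_sumr; exact: exchange_big. Qed.

Lemma pscaleM p q F k : pscale (p * q) F k = pscale p (pscale q F) k.
Proof.
rewrite (pscale_truncE _ _ (leqnn k)) -mulrA coefM; apply: eq_bigr => i _.
by rewrite (pscale_truncE q F (leq_subr i k)).
Qed.

Lemma pscaleC c F k : pscale c%:P F k = c * F k.
Proof.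
rewrite /pscale big_ord_recl coefC subn0 big1 ?addr0 // => i _.
by rewrite coefC mul0r.
Qed.

Lemma pscale1 F k : pscale 1 F k = F k.
Proof. by rewrite -polyC1 pscaleC mul1r. Qed.

Lemma pscaleCMl c p F k :
  pscale (c%:P * p) F k = pscale p (fun j => c * F j) k.
Proof. by rewrite mulrC pscaleM; apply: eq_pscale => j _; rewrite pscaleC. Qed.

Lemma pscale_intrMl (z : int) p F k :
  pscale (z%:~R * p) F k = pscale p (fun j => z%:~R * F j) k.
Proof. by rewrite -(rmorph_int (@polyC C)) pscaleCMl. Qed.

Lemma pscaleX F k : pscale 'X F k = if k is k'.+1 then F k' else 0.
Proof.
rewrite (pscale_truncE _ _ (leqnn k)) mulrC coefMX; case: k => [//|k] /=.
by rewrite coef_poly ltnS leqnSn.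
Qed.

Lemma psderiv_pscale p F k :
  psderiv (pscale p F) k = pscale p^`() F k + pscale p (psderiv F) k.
Proof.
rewrite /psderiv (pscale_truncE _ _ (leqnSn k)) (pscale_truncE _ _ (leqnn k.+1)).
rewrite mulr_natr -coef_deriv derivM coefD; congr (_ + _).
rewrite !coefM; apply: eq_bigr => i _; congr (_ * _).
rewrite coef_deriv coef_poly ifT ?mulr_natr // !ltnS.
by rewrite (leq_trans (leq_subr _ _)) // -ltnS ltn_ord.
Qed.

End PowerSeries.

Section LinearExtension.
Variables (C : numClosedFieldType) (n : nat) (H : 'rV[int]_n -> pseries C).
Implicit Types (p : {poly C}) (s t : Lpoly C n).

Definition linext s : pseries C :=
  fun k => \sum_(u <- msupp s) pscale s@_u (H u) k.

Lemma linextEw (d : {fset 'rV[int]_n}) s k : (msupp s `<=` d)%fset ->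
  linext s k = \sum_(u <- d) pscale s@_u (H u) k.
Proof.
move=> le_sd; rewrite /linext (big_fset_incl _ le_sd) // => u _ /mcoeff_outdom ->.
by rewrite -[0]polyC0 pscaleC mul0r.
Qed.

Lemma linextB s t k : linext (s - t) k = linext s k - linext t k.
Proof.
have le_s := fsubsetUl (msupp s) (msupp t).
have le_t := fsubsetUr (msupp s) (msupp t).
rewrite (linextEw k (msuppB_le s t)) (linextEw k le_s) (linextEw k le_t).
by rewrite -sumrB; apply: eq_bigr => u _; rewrite mcoeffB pscaleDl pscaleNl.
Qed.

Definition linext_at k s := linext s k.
HB.instance Definition _ k := GRing.isZmodMorphism.Build (Lpoly C n) C (linext_at k)
  (fun s t => linextB s t k).

Lemma linextD s t k : linext (s + t) k = linext s k + linext t k.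
Proof. exact: (raddfD (linext_at k)). Qed.

Lemma linext_sum (I : Type) (r : seq I) (P : pred I) (F : I -> Lpoly C n) k :
  linext (\sum_(i <- r | P i) F i) k = \sum_(i <- r | P i) linext (F i) k.
Proof. exact: (raddf_sum (linext_at k)). Qed.

Lemma linextZ p s k : linext (p *: s) k = pscale p (linext s) k.
Proof.
rewrite (linextEw k (msuppZ_le p s)) /linext pscale_sumr.
by apply: eq_bigr => u _; rewrite mcoeffZ pscaleM.
Qed.

Lemma linextU p u k : linext << p *g u >> k = pscale p (H u) k.
Proof. by rewrite (linextEw k msuppU_le) big_seq_fset1 mcoeffUU. Qed.

End LinearExtension.

Lemma eq_linext (C : numClosedFieldType) (n : nat) (H H' : 'rV[int]_n -> pseries C)
    (s : Lpoly C n) k :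
  (forall u, u \in msupp s -> forall j, H u j = H' u j) ->
  linext H s k = linext H' s k.
Proof.
move=> eqH; rewrite /linext !big_seq; apply: eq_bigr => u su.
by apply: eq_pscale => j _; apply: eqH.
Qed.

Lemma linext_lincomb (C : numClosedFieldType) (n : nat) (I : Type) (r : seq I)
    (c : I -> C) (H : I -> 'rV[int]_n -> pseries C) (s : Lpoly C n) k :
  linext (fun u j => \sum_(i <- r) c i * H i u j) s k =
  \sum_(i <- r) c i * linext (H i) s k.
Proof.
rewrite /linext; under [RHS]eq_bigr do rewrite mulr_sumr.
rewrite [RHS]exchange_big; apply: eq_bigr => u _.
by rewrite pscale_sumr; apply: eq_bigr => i _; rewrite pscaleZr.
Qed.

Lemma monalgUZ1 (K : choiceType) (R : nzRingType) (x : R) (k : K) :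
  << x *g k >> = x *: << 1 *g k >>.
Proof. by apply/malgP => k'; rewrite mcoeffZ !mcoeffU mulrnAr mulr1. Qed.

Definition int_box (n K : nat) : seq 'rV[int]_n :=
  [seq \row_i ((f i : nat)%:Z - K%:Z) | f : {ffun 'I_n -> 'I_(K + K).+1}].

Lemma mem_int_box n K (u : 'rV[int]_n) :
  (forall i, `|u ord0 i| <= K)%N -> u \in int_box n K.
Proof.
move=> u_le; apply/mapP.
exists [ffun i => inord `|u ord0 i + K%:Z|]; first by rewrite mem_enum.
apply/matrixP => i0 i; rewrite [i0]ord1 !mxE ffunE inordK;
  by have := u_le i; move: (u ord0 i) => x; lia.
Qed.

Section Coordinates.
Variables (C : numClosedFieldType) (n m : nat) (a : 'I_m -> 'rV[int]_n).
Hypothesis Hli : lin_indep_real C a.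
Implicit Types (c t : 'I_m -> C) (u w : 'rV[int]_n).

Lemma eq_is_comb c c' u : c =1 c' -> is_comb a c u -> is_comb a c' u.
Proof. by move=> eq_c h i; rewrite h; apply: eq_bigr => j _; rewrite eq_c. Qed.

Lemma is_combD c c' u u' : is_comb a c u -> is_comb a c' u' ->
  is_comb a (fun j => c j + c' j) (u + u').
Proof.
move=> h h' i; rewrite mxE intrD h h' -big_split.
by apply: eq_bigr => j _; rewrite mulrDl.
Qed.

Lemma is_combB c c' u u' : is_comb a c u -> is_comb a c' u' ->
  is_comb a (fun j => c j - c' j) (u - u').
Proof.
move=> h h' i; rewrite !mxE rmorphB /= h h' -sumrB.
by apply: eq_bigr => j _; rewrite mulrBl.
Qed.

Lemma is_comb_delta q : is_comb a (fun j => (j == q)%:R : C) (a q).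
Proof.
move=> i; rewrite (bigD1 q) //= eqxx mul1r big1 ?addr0 // => j /negbTE ->.
by rewrite mul0r.
Qed.

(* Independence over C follows by taking real and imaginary parts. *)
Lemma lin_indep_complex c :
  (forall i : 'I_n, \sum_(j < m) c j * (a j ord0 i)%:~R = 0) -> c =1 (fun _ => 0).
Proof.
move=> h; have part_eq0 (f : {additive C -> C}) : (forall x, f x \is Num.real) ->
    (forall x (z : int), f (x * z%:~R) = f x * z%:~R) -> forall j, f (c j) = 0.
  move=> f_real fM; apply: Hli => // i.
  transitivity (f (\sum_(j < m) c j * (a j ord0 i)%:~R)); last by rewrite h raddf0.
  by rewrite raddf_sum; apply: eq_bigr => j _; rewrite fM.
have MRe (x : C) (z : int) : 'Re (x * z%:~R) = 'Re x * z%:~R by apply: ReMr; apply: realz.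
have MIm (x : C) (z : int) : 'Im (x * z%:~R) = 'Im x * z%:~R by apply: ImMr; apply: realz.
move=> j; rewrite [c j]Crect (part_eq0 (@Re C : {additive C -> C}) (@Creal_Re C) MRe).
by rewrite (part_eq0 (@Im C : {additive C -> C}) (@Creal_Im C) MIm) mulr0 addr0.
Qed.

Lemma is_comb_real_uniq c c' u :
  (forall j, c j \is Num.real) -> (forall j, c' j \is Num.real) ->
  is_comb a c u -> is_comb a c' u -> c =1 c'.
Proof.
move=> c_real c'_real h h' j; apply/eqP; rewrite -subr_eq0; apply/eqP; move: j.
apply: Hli => [j|i]; first by rewrite rpredB.
by rewrite -(is_combB h h' i) subrr mxE.
Qed.

Lemma is_comb_inj c u u' : is_comb a c u -> is_comb a c u' -> u = u'.
Proof.
move=> h h'; apply/matrixP => i j; rewrite [i]ord1.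
by apply: (@intr_inj C); rewrite h h'.
Qed.

Lemma inMP u : inM C a u <-> exists2 t : 'I_m -> C, (forall j, 0 <= t j) & is_comb a t u.
Proof.
split=> [[_ [t [t_ge0 ht]]]|[t t_ge0 ht]].
  by exists t => // j; case: (t_ge0 j).
by split; exists t; split=> // j; rewrite ?ger0_real ?t_ge0.
Qed.

Lemma inM_add u u' : inM C a u -> inM C a u' -> inM C a (u + u').
Proof.
move=> /inMP[t t_ge0 ht] /inMP[t' t'_ge0 ht']; apply/inMP.
by exists (fun j => t j + t' j); [move=> j; rewrite addr_ge0 | exact: is_combD].
Qed.

Lemma inM_a q : inM C a (a q).
Proof.
by apply/inMP; exists (fun j => (j == q)%:R) => [j|]; [exact: ler0n | exact: is_comb_delta].
Qed.

Lemma inB_inM b : inB C a b -> inM C a b.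
Proof.
move=> [_ [c [hc hb]]]; apply/inMP; exists c => // j.
by case: (hc j) => _ /andP[].
Qed.

Lemma coords_inB_or_ge1 t w : (forall j, 0 <= t j) -> is_comb a t w ->
  inB C a w \/ exists q, 1 <= t q.
Proof.
move=> t_ge0 hw; have [lt1|/forallPn[q]] := boolP [forall q, t q < 1]; last first.
  by rewrite -real_leNgt ?ger0_real // => tq_ge1; right; exists q.
have PA : PA_coeffs a w t by split=> // j; rewrite ger0_real ?t_ge0 ?(forallP lt1).
by left; split; [exists t; split=> // j; exact: (PA.1 j).1 | exists t].
Qed.

Lemma inS0 : inS a (0 : Lpoly C n).
Proof. by move=> w; rewrite msupp0 in_fset0. Qed.

Lemma inS_monomial (p : {poly C}) u : inM C a u -> inS a << p *g u >>.
Proof. by move=> hu w /(fsubsetP msuppU_le); rewrite in_fset1 => /eqP ->. Qed.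

Lemma inSD (s s' : Lpoly C n) : inS a s -> inS a s' -> inS a (s + s').
Proof.
move=> hs hs' w /(fsubsetP (msuppD_le _ _)).
by rewrite in_fsetU => /orP[]; [exact: hs | exact: hs'].
Qed.

Lemma inSN (s : Lpoly C n) : inS a s -> inS a (- s).
Proof. by move=> hs w; rewrite msuppN; exact: hs. Qed.

Lemma inS_sum (I : Type) (r : seq I) (P : pred I) (F : I -> Lpoly C n) :
  (forall i, P i -> inS a (F i)) -> inS a (\sum_(i <- r | P i) F i).
Proof.
move=> hF; elim/big_rec: _ => [|i s Pi hs]; first exact: inS0.
exact: inSD (hF i Pi) hs.
Qed.

Lemma ratr_real (x : rat) : (ratr x : C) \is Num.real.
Proof.
rewrite realE -(rmorph0 (@ratr C)) !ler_rat.
by case: (le_total 0 x) => ->; rewrite ?orbT.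
Qed.

(* [C] need not be archimedean, but the coordinates of an integral point are rational. *)
Lemma coords_sum_bounded t w : (forall j, 0 <= t j) -> is_comb a t w ->
  exists N : nat, \sum_(j < m) t j <= N%:R.
Proof.
move=> t_ge0 hw.
pose AQ : 'M[rat]_(m, n) := \matrix_(j, i) (a j ord0 i)%:~R.
pose wQ : 'rV[rat]_n := \row_i (w ord0 i)%:~R.
have eA : map_mx ratr AQ = \matrix_(j, i) (a j ord0 i)%:~R :> 'M[C]_(m, n).
  by apply/matrixP => j i; rewrite !mxE ratr_int.
have ew : map_mx ratr wQ = \row_i (w ord0 i)%:~R :> 'rV[C]_n.
  by apply/matrixP => j i; rewrite !mxE ratr_int.
have wQ_sub : (wQ <= AQ)%MS.
  rewrite -(map_submx (@ratr C)) eA ew; apply/submxP; exists (\row_j t j).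
  by apply/matrixP => i0 i; rewrite !mxE (hw i); apply: eq_bigr => j _; rewrite !mxE.
pose tQ := wQ *m pinvmx AQ.
have htQ : is_comb a (fun j => ratr (tQ ord0 j) : C) w.
  move=> i; have := congr1 (fun A : 'rV[C]_n => A ord0 i)
                    (congr1 (map_mx (@ratr C)) (mulmxKpV wQ_sub)).
  by rewrite map_mxM eA ew /= !mxE => <-; apply: eq_bigr => j _; rewrite !mxE.
have etQ := is_comb_real_uniq (fun j => ger0_real (t_ge0 j)) (fun j => ratr_real _) hw htQ.
exists (\sum_(j < m) Num.Def.archi_bound (tQ ord0 j))%N.
rewrite natr_sum; apply: ler_sum => j _; rewrite etQ.
have tQ_ge0 : 0 <= tQ ord0 j by rewrite -(ler_rat C) rmorph0 -etQ.
by rewrite -(rmorph_nat (@ratr C)) ler_rat ltW ?archi_boundP.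
Qed.

Lemma coords_subr_delta t w q : (forall j, 0 <= t j) -> is_comb a t w -> 1 <= t q ->
  [/\ forall j, 0 <= t j - (j == q)%:R,
       is_comb a (fun j => t j - (j == q)%:R) (w - a q)
     & \sum_(j < m) (t j - (j == q)%:R) = \sum_(j < m) t j - 1].
Proof.
move=> t_ge0 hw tq_ge1; split.
- by move=> j; case: eqP => [->|_]; rewrite ?subr_ge0 ?subr0.
- exact: is_combB hw (is_comb_delta q).
rewrite sumrB; congr (_ - _).
by rewrite (bigD1 q) //= eqxx big1 ?addr0 // => j /negbTE ->.
Qed.

Definition Bbound : nat := (\sum_(i < n) \sum_(j < m) `|a j ord0 i|)%N.

Lemma inB_bounded b : inB C a b -> forall i, (`|b ord0 i| <= Bbound)%N.
Proof.
move=> [_ [c [hc hb]]] i.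
have le_b : (`|b ord0 i|%N%:R : C) <= (\sum_(j < m) `|a j ord0 i|)%N%:R.
  rewrite natr_absz intr_norm hb natr_sum.
  apply: (le_trans (ler_norm_sum _ _ _)); apply: ler_sum => j _.
  have /andP[c_ge0 c_lt1] := (hc j).2.
  by rewrite normrM natr_absz intr_norm (ger0_norm c_ge0) ler_piMl ?normr_ge0 ?ltW.
rewrite ler_nat in le_b; apply: (leq_trans le_b).
by rewrite /Bbound (bigD1 i) //= leq_addr.
Qed.

Definition Benum : seq 'rV[int]_n :=
  undup [seq b <- int_box n Bbound | is_left (excluded_middle_informative (inB C a b))].

Lemma Benum_uniq : uniq Benum.
Proof. exact: undup_uniq. Qed.

Lemma mem_Benum b : b \in Benum <-> inB C a b.
Proof.
rewrite mem_undup mem_filter; case: excluded_middle_informative => //= hb.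
by split=> // _; apply: mem_int_box; apply: inB_bounded.
Qed.

End Coordinates.

Lemma brkB1 (C : numClosedFieldType) (z : C) (s : int) : s <= 0 ->
  brk z (s - 1) = brk z s * (z + s%:~R).
Proof.
case: s => [[|k]|k] // _.
  rewrite (_ : Posz 0 - 1 = Negz 0); last by rewrite NegzE.
  by rewrite /brk big_ord1 big_ord0 invr1 mul1r subr0 addr0.
rewrite (_ : Negz k - 1 = Negz k.+1); last by rewrite !NegzE; lia.
by rewrite /brk [in LHS]big_ord_recr /= NegzE rmorphN.
Qed.

Lemma intr_frac_sub_eq0 (C : numClosedFieldType) (x y : C) (z : int) :
  0 <= x < 1 -> 0 <= y < 1 -> z%:~R = x - y -> z = 0.
Proof.
move=> /andP[x_ge0 x_lt1] /andP[y_ge0 y_lt1] ez.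
have z_lt1 : z < 1 by rewrite -(ltrz1 C) ez (le_lt_trans _ x_lt1) // gerBl.
have Nz_lt1 : - z < 1.
  by rewrite -(ltrz1 C) rmorphN /= ez opprB (le_lt_trans _ y_lt1) // gerBl.
lia.
Qed.

Section Setting.
Variables (C : numClosedFieldType) (n m : nat).
Variables (a : 'I_m -> 'rV[int]_n) (a0 : 'rV[int]_n) (l : 'I_m -> nat) (l0 : nat).
Hypothesis Hli : lin_indep_real C a.
Hypothesis Hl : forall j, (0 < l j)%N.
Hypothesis Hl0 : (0 < l0)%N.
Hypothesis Ha0 : a0 *+ l0 = \sum_(j < m) a j *+ l j.
Implicit Types (t : 'I_m -> C) (u w : 'rV[int]_n) (p : {poly C}).

Lemma l_neq0 j : (l j)%:R != 0 :> C.
Proof. by rewrite pnatr_eq0 -lt0n. Qed.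

Lemma is_comb_a0 : is_comb a (fun j => (l j)%:R / l0%:R : C) a0.
Proof.
have l0_neq0 : l0%:R != 0 :> C by rewrite pnatr_eq0 -lt0n.
move=> i; apply: (mulIf l0_neq0); rewrite mulr_natr -rmorphMn /= -mulmxnE Ha0.
rewrite summxE rmorph_sum mulr_suml; apply: eq_bigr => j _.
by rewrite mulmxnE rmorphMn /= mulrAC divfK // mulr_natl.
Qed.

Lemma inM_a0 : inM C a a0.
Proof.
apply/inMP; exists (fun j => (l j)%:R / l0%:R); last exact: is_comb_a0.
by move=> j; rewrite divr_ge0 ?ler0n.
Qed.

Lemma inM_addMn u k : inM C a u -> inM C a (u + a0 *+ k).
Proof.
move=> hu; elim: k => [|k IH]; first by rewrite addr0.
by rewrite mulrSr addrA; apply: inM_add IH inM_a0.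
Qed.

Lemma Dx_relationP t w (x : C) (y : 'I_m -> C) : is_comb a t w ->
  (forall i, (w ord0 i)%:~R * x
             + \sum_(q < m) ((l q)%:Z * a q ord0 i)%:~R * y q = 0) <->
  (forall q, t q * x + (l q)%:R * y q = 0).
Proof.
move=> hw; have sumE i : (w ord0 i)%:~R * x + \sum_(q < m) ((l q)%:Z * a q ord0 i)%:~R * y q
    = \sum_(q < m) (t q * x + (l q)%:R * y q) * (a q ord0 i)%:~R.
  rewrite (hw i) mulr_suml -big_split /=; apply: eq_bigr => q _.
  by rewrite intrM -[((l q)%:Z)%:~R]/((l q)%:R : C); ring.
split=> [rel|rec i]; last by rewrite sumE big1 // => q _; rewrite rec mul0r.
by apply: (lin_indep_complex Hli (c := fun q => t q * x + (l q)%:R * y q)) => i; rewrite -sumE.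
Qed.

Section Coefficients.
Variable b : 'rV[int]_n.
Hypothesis Hb : inB C a b.
Local Notation v := (vB C a b).
Local Notation g := (gcoef C a l b).

Lemma vB_spec : PA_coeffs a b v.
Proof.
rewrite /vB; case: excluded_middle_informative => [h|[]]; last by case: Hb.
by case: (constructive_indefinite_description _ h).
Qed.

Lemma vB01 j : 0 <= v j < 1. Proof. by case: vB_spec => /(_ j)[]. Qed.

Lemma vB_real j : v j \is Num.real. Proof. by case: vB_spec => /(_ j)[]. Qed.

Lemma is_comb_vB : is_comb a v b. Proof. by case: vB_spec. Qed.

Lemma vB_sub_real (s : 'I_m -> int) j : v j - (s j)%:~R \is Num.real.
Proof. by rewrite rpredB ?vB_real ?realz. Qed.

Definition gprod (s : 'I_m -> int) : C :=
  \prod_(j < m) (brk (- v j) (s j) * (l j)%:R ^ (s j)).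

Lemma s_data_uniq u s s' : s_data C a b u s -> s_data C a b u s' -> s =1 s'.
Proof.
move=> [_ hs] [_ hs'] j; apply: (@intr_inj C); apply/eqP.
rewrite -eqr_opp -(inj_eq (addrI (v j))).
by rewrite (is_comb_real_uniq Hli (vB_sub_real s) (vB_sub_real s') hs hs').
Qed.

Lemma gcoefE u s : s_data C a b u s -> g u = gprod s.
Proof.
move=> hs; rewrite /gcoef; case: excluded_middle_informative => [h|[]]; last by exists s.
case: (constructive_indefinite_description _ h) => s' hs' /=.
by apply: eq_bigr => j _; rewrite (s_data_uniq hs' hs j).
Qed.

Lemma gcoef_eq0 u : ~ (exists s, s_data C a b u s) -> g u = 0.
Proof. by move=> nh; rewrite /gcoef; case: excluded_middle_informative. Qed.

Lemma gprod_pred s q : (forall j, s j <= 0) ->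
  gprod (fun j => if j == q then s j - 1 else s j) =
  gprod s * ((s q)%:~R - v q) / (l q)%:R.
Proof.
move=> s_le0; rewrite /gprod (bigD1 q) //= [in RHS](bigD1 q) //= eqxx.
rewrite (eq_bigr (fun j => brk (- v j) (s j) * (l j)%:R ^ (s j))); last first.
  by move=> j /negbTE ->.
rewrite brkB1 // expfzDr ?l_neq0 // exprN1.
have := l_neq0 q; set L := (l q)%:R; set P := \prod_(_ < _ | _) _ => L_neq0.
by field.
Qed.

Lemma s_data_succ w s q : s_data C a b w s ->
  s_data C a b (w + a q) (fun j => if j == q then s j - 1 else s j).
Proof.
move=> [s_le0 hs]; split=> [j|].
  by case: eqP => _; rewrite ?s_le0 //; have := s_le0 j; lia.
apply: (eq_is_comb _ (is_combD hs (is_comb_delta C a q))) => j.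
by case: eqP => [->|_]; rewrite ?addr0 // rmorphB /=; ring.
Qed.

(* The new [q]-th exponent is [<= 0] because [0 <= t q = v q - s q - 1] and [v q < 1]. *)
Lemma s_data_pred t w s q : (forall j, 0 <= t j) -> is_comb a t w ->
  s_data C a b (w + a q) s ->
  s_data C a b w (fun j => if j == q then s j + 1 else s j).
Proof.
move=> t_ge0 hw [s_le0 hs].
have hw' : is_comb a (fun j => v j - (s j)%:~R - (j == q)%:R) w.
  by have := is_combB hs (is_comb_delta C a q); rewrite addrK.
have tq : t q = v q - (s q)%:~R - 1.
  have := is_comb_real_uniq Hli (fun j => ger0_real (t_ge0 j)) _ hw hw' q.
  by rewrite eqxx; apply=> j; rewrite rpredB ?vB_sub_real ?realn.
have s_lt0 : (s q)%:~R < 0 :> C.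
  have := t_ge0 q; rewrite tq subr_ge0 lerBrDr => /le_lt_trans/(_ (andP (vB01 q)).2).
  by rewrite gtrDl.
split=> [j|]; first by case: eqP => [->|_]; [move: s_lt0; rewrite ltrz0; lia | exact: s_le0].
apply: (eq_is_comb _ hw') => j; case: eqP => [->|_]; last by rewrite subr0.
by rewrite rmorphD /=; ring.
Qed.

Lemma gcoef_rec t w q : (forall j, 0 <= t j) -> is_comb a t w ->
  t q * g w + (l q)%:R * g (w + a q) = 0.
Proof.
move=> t_ge0 hw; have [[s hs]|no_s] := classic (exists s, s_data C a b w s).
  rewrite (gcoefE hs) (gcoefE (s_data_succ q hs)) gprod_pred; last by case: hs.
  have -> : t q = v q - (s q)%:~R.
    apply: (is_comb_real_uniq Hli _ (vB_sub_real s) hw hs.2) => j.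
    exact: ger0_real.
  have := l_neq0 q; set L := (l q)%:R; set P := gprod s => L_neq0.
  by field.
rewrite (gcoef_eq0 no_s) (@gcoef_eq0 (w + a q)) ?mulr0 ?addr0 // => -[s hs].
by apply: no_s; exists (fun j => if j == q then s j + 1 else s j); apply: s_data_pred hs.
Qed.

Lemma gcoef_Dx t w i : (forall j, 0 <= t j) -> is_comb a t w ->
  (w ord0 i)%:~R * g w + \sum_(q < m) ((l q)%:Z * a q ord0 i)%:~R * g (w + a q) = 0.
Proof.
move=> t_ge0 hw; move: i.
by apply/(Dx_relationP _ (fun q => g (w + a q)) hw) => q; apply: gcoef_rec.
Qed.

Lemma gcoef_self : g b = 1.
Proof.
have hs : s_data C a b b (fun _ => 0).
  by split=> //; apply: (eq_is_comb _ is_comb_vB) => j; rewrite subr0.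
rewrite (gcoefE hs) /gprod big1 // => j _.
by rewrite expr0z mulr1 /brk /= big_ord0 invr1.
Qed.

End Coefficients.

Lemma gcoef_other b b' : inB C a b -> inB C a b' -> b' != b -> gcoef C a l b b' = 0.
Proof.
move=> Hb Hb' /eqP nb; apply: gcoef_eq0 => -[s [_ hs]].
have evB := is_comb_real_uniq Hli (vB_real Hb') (vB_sub_real Hb s) (is_comb_vB Hb') hs.
have s0 j : s j = 0.
  by apply: (intr_frac_sub_eq0 (vB01 Hb j) (vB01 Hb' j)); rewrite evB opprB addrC subrK.
apply: nb; apply: (is_comb_inj (is_comb_vB Hb')).
by apply: (eq_is_comb _ (is_comb_vB Hb)) => j; rewrite evB s0 subr0.
Qed.

Lemma inS_Dx i (s : Lpoly C n) : inS a s -> inS a (Dx a a0 l l0 i s).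
Proof.
move=> hs; rewrite /Dx big_seq; apply: inS_sum => u /hs hu.
have hu0 : inM C a (u + a0) := inM_add hu inM_a0.
apply: inSD; last exact/inSN/inS_monomial.
apply: inSD; first exact: inS_monomial.
by apply: inS_sum => q _; apply/inS_monomial/inM_add/inM_a.
Qed.

Lemma inS_Dlam (s : Lpoly C n) : inS a s -> inS a (Dlam a0 l0 s).
Proof.
move=> hs; rewrite /Dlam big_seq; apply: inS_sum => u /hs hu.
apply: inSD; first exact: inS_monomial.
exact/inSN/inS_monomial/inM_add/inM_a0.
Qed.

Lemma linext_Dx_monomial (H : 'rV[int]_n -> pseries C) i u p k :
  linext H (<< (u ord0 i)%:~R * p *g u >>
            + \sum_(q < m) << ((l q)%:Z * a q ord0 i)%:~R * p *g (u + a q) >>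
            - << ((l0)%:Z * a0 ord0 i)%:~R * ('X * p) *g (u + a0) >>) k =
  pscale p (fun j => (u ord0 i)%:~R * H u j
                     + \sum_(q < m) ((l q)%:Z * a q ord0 i)%:~R * H (u + a q) j
                     - ((l0)%:Z * a0 ord0 i)%:~R * pscale 'X (H (u + a0)) j) k.
Proof.
rewrite linextB linextD linext_sum !linextU pscale_intrMl.
under eq_bigr do rewrite linextU pscale_intrMl.
rewrite [('X * p)]mulrC [(_ * (p * 'X))]mulrA pscaleM pscale_intrMl.
by rewrite -pscale_sumr -pscaleDr -pscaleNr -pscaleDr.
Qed.

Lemma linext_Dlam_monomial (H : 'rV[int]_n -> pseries C) u p k :
  linext H (<< p^`() *g u >> - << l0%:R * p *g (u + a0) >>) k =
  pscale p^`() (H u) k + pscale p (fun j => - (l0%:R * H (u + a0) j)) k.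
Proof.
by rewrite linextB !linextU -(rmorph_nat (@polyC C)) pscaleCMl -pscaleNr.
Qed.

Section Solutions.
Variable b : 'rV[int]_n.
Hypothesis Hb : inB C a b.
Local Notation G := (Gser C a a0 l l0 b).

Lemma Gser_succ u k : psderiv (G u) k = - (l0%:R * G (u + a0) k).
Proof.
rewrite /psderiv /Gser mulrS addrA factS natrM exprS.
have fact_neq0 : (k`!)%:R != 0 :> C by rewrite pnatr_eq0 -lt0n fact_gt0.
by field; rewrite fact_neq0 nat1r pnatr_eq0.
Qed.

Lemma GserE u k : G u k = gcoef C a l b (u + a0 *+ k) * ((- l0%:R) ^+ k / (k`!)%:R).
Proof. by rewrite /Gser mulrA. Qed.

Lemma Gser_Dx u i k : inM C a u ->
  (u ord0 i)%:~R * G u k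
  + \sum_(q < m) ((l q)%:Z * a q ord0 i)%:~R * G (u + a q) k
  = - ((a0 ord0 i)%:~R *+ k) * G u k.
Proof.
move=> hu; have /inMP[t t_ge0 hw] := inM_addMn k hu.
have sumE : \sum_(q < m) ((l q)%:Z * a q ord0 i)%:~R * gcoef C a l b (u + a0 *+ k + a q)
            = - (((u + a0 *+ k) ord0 i)%:~R * gcoef C a l b (u + a0 *+ k)).
  by apply/eqP; rewrite -addr_eq0 addrC (gcoef_Dx Hb i t_ge0 hw).
under eq_bigr => q _ do rewrite GserE (addrAC u (a q)) mulrA.
rewrite -mulr_suml sumE !GserE mxE mulmxnE rmorphD rmorphMn /=.
by ring.
Qed.

Lemma xi_isDhom : isDhom (C:=C) a a0 l l0 (xi (C:=C) a a0 l l0 b).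
Proof.
rewrite (_ : xi _ _ _ _ _ = linext G) //; split.
- by move=> p s s' _ _ k; rewrite linextD linextZ.
- move=> i s hs k; rewrite /Dx linext_sum big_seq big1 // => u /hs hu.
  rewrite linext_Dx_monomial -[RHS](pscale0r s@_u k).
  apply: eq_pscale => j _; rewrite Gser_Dx // pscaleX.
  case: j => [|j]; first by rewrite mulr0n mulNr mul0r oppr0 mulr0 subr0.
  rewrite mulNr mulrnAl -mulr_natr -mulrA -[G u j.+1 * _]/(psderiv (G u) j) Gser_succ.
  by rewrite intrM -[((l0)%:Z)%:~R]/(l0%:R : C); ring.
- move=> s _ k; rewrite /Dlam linext_sum /psderiv {2}/linext mulr_suml.
  apply: eq_bigr => u _; rewrite linext_Dlam_monomial -[RHS]/(psderiv _ k).
  by rewrite psderiv_pscale; congr (_ + _); apply: eq_pscale => j _; rewrite Gser_succ.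
Qed.

End Solutions.

Lemma cone_recursion_eq0 (D : 'rV[int]_n -> C) :
  (forall t w q, (forall j, 0 <= t j) -> is_comb a t w ->
     t q * D w + (l q)%:R * D (w + a q) = 0) ->
  (forall b, inB C a b -> D b = 0) ->
  forall w, inM C a w -> D w = 0.
Proof.
move=> D_rec D_B w /inMP[t t_ge0 hw]; have [N] := coords_sum_bounded Hli t_ge0 hw.
elim: N w t t_ge0 hw => [|N IH] w t t_ge0 hw le_tN;
  have [/D_B //|[q tq_ge1]] := coords_inB_or_ge1 t_ge0 hw;
  have [t'_ge0 hw' sum_t'] := coords_subr_delta t_ge0 hw tq_ge1.
  have : 0 <= \sum_(j < m) (t j - (j == q)%:R) by apply: sumr_ge0.
  by rewrite sum_t' subr_ge0 => /le_trans/(_ le_tN); rewrite ler10.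
have Dw' : D (w - a q) = 0 by apply: IH hw' _ => //; rewrite sum_t' lerBlDr natr1.
have := D_rec _ _ q t'_ge0 hw'; rewrite Dw' mulr0 add0r subrK => /eqP.
by rewrite mulf_eq0 (negbTE (l_neq0 q)) => /eqP.
Qed.

Lemma xi_monomial0 b b' : inB C a b -> inB C a b' ->
  xi (C:=C) a a0 l l0 b << 1 *g b' >> 0 = (b == b')%:R.
Proof.
move=> Hb Hb'; rewrite -[LHS]/(linext (Gser C a a0 l l0 b) _ 0) linextU pscale1.
rewrite /Gser mulr0n addr0 expr0 fact0 divr1 mulr1.
have [<-|neq] := eqVneq b b'; first by rewrite gcoef_self.
by rewrite (gcoef_other Hb Hb') // eq_sym.
Qed.

Lemma xi_lin_indep (r : seq 'rV[int]_n) (c : 'rV[int]_n -> C) :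
  uniq r -> (forall b, b \in r -> inB C a b) ->
  (forall s : Lpoly C n, inS a s -> forall k,
      \sum_(b <- r) c b * xi (C:=C) a a0 l l0 b s k = 0) ->
  forall b, b \in r -> c b = 0.
Proof.
move=> r_uniq r_B vanish b br; have Bb := r_B b br.
have := vanish _ (inS_monomial (p := 1) (inB_inM Bb)) 0%N.
rewrite (bigD1_seq b) //= (xi_monomial0 Bb Bb) eqxx mulr1 big_seq_cond big1 ?addr0 //.
by move=> b' /andP[b'r nb']; rewrite (xi_monomial0 (r_B b' b'r) Bb) (negbTE nb') mulr0.
Qed.

Section Homomorphisms.
Variable phi : Lpoly C n -> pseries C.
Hypothesis Hphi : isDhom (C:=C) a a0 l l0 phi.
Local Notation phiU u := (phi << 1 *g u >>).
Implicit Types s : Lpoly C n.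

Lemma phi_lin p s s' k : inS a s -> inS a s' ->
  phi (p *: s + s') k = pscale p (phi s) k + phi s' k.
Proof. by case: Hphi => lin _ _ hs hs'; rewrite lin. Qed.

Lemma phi0 k : phi 0 k = 0.
Proof.
have := phi_lin 1 k (inS0 a) (inS0 a); rewrite scaler0 addr0 pscale1 -{1}[phi 0 k]addr0.
by move/addrI.
Qed.

Lemma phiD s s' k : inS a s -> inS a s' -> phi (s + s') k = phi s k + phi s' k.
Proof. by move=> hs hs'; rewrite -[s in LHS]scale1r phi_lin // pscale1. Qed.

Lemma phiZ p s k : inS a s -> phi (p *: s) k = pscale p (phi s) k.
Proof.
by move=> hs; have := phi_lin p k hs (inS0 a); rewrite !addr0 phi0 addr0.
Qed.

Lemma phi_sum (I : Type) (r : seq I) (P : pred I) (F : I -> Lpoly C n) k :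
  (forall i, P i -> inS a (F i)) ->
  phi (\sum_(i <- r | P i) F i) k = \sum_(i <- r | P i) phi (F i) k.
Proof.
move=> hF; elim: r => [|x r IH]; first by rewrite !big_nil phi0.
rewrite !big_cons; case: ifP => // Px.
by rewrite phiD ?IH //; [apply: hF | apply: inS_sum].
Qed.

Lemma phi_monomial p u k : inM C a u -> phi << p *g u >> k = pscale p (phiU u) k.
Proof. by move=> hu; rewrite monalgUZ1 phiZ //; apply: inS_monomial. Qed.

Lemma phi_linext s k : inS a s -> phi s k = linext (fun u => phiU u) s k.
Proof.
move=> hs; rewrite {1}(monalgE s) big_seq phi_sum => [|u su]; last first.
  by apply: inS_monomial; apply: hs.
rewrite /linext big_seq; apply: eq_bigr => u su.
by rewrite phi_monomial //; apply: hs.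
Qed.

Lemma phi_succ u k : inM C a u -> psderiv (phiU u) k = - (l0%:R * phiU (u + a0) k).
Proof.
move=> hu; case: Hphi => _ _ phiDlam.
rewrite -phiDlam; last exact: inS_monomial.
rewrite phi_linext; last exact/inS_Dlam/inS_monomial.
rewrite /Dlam msuppU oner_eq0 big_seq_fset1 mcoeffUU linext_Dlam_monomial.
by rewrite -polyC1 derivC -[0]polyC0 pscaleC mul0r add0r pscale1.
Qed.

Lemma phi_Dx_rel w i : inM C a w ->
  (w ord0 i)%:~R * phiU w 0
  + \sum_(q < m) ((l q)%:Z * a q ord0 i)%:~R * phiU (w + a q) 0 = 0.
Proof.
move=> hw; case: Hphi => _ phiDx _.
have := phiDx i _ (inS_monomial (p := 1) hw) 0.
rewrite phi_linext; last by apply: inS_Dx; apply: inS_monomial.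
rewrite /Dx msuppU oner_eq0 big_seq_fset1 mcoeffUU linext_Dx_monomial pscale1.
by rewrite pscaleX mulr0 subr0.
Qed.

Lemma phi_expand k u : inM C a u ->
  phiU u k = phiU (u + a0 *+ k) 0 * ((- l0%:R) ^+ k / (k`!)%:R).
Proof.
elim: k u => [|k IH] u hu; first by rewrite mulr0n addr0 expr0 fact0 divr1 mulr1.
have k1_neq0 : (k.+1)%:R != 0 :> C by rewrite pnatr_eq0.
have fact_neq0 : (k`!)%:R != 0 :> C by rewrite pnatr_eq0 -lt0n fact_gt0.
apply: (mulIf k1_neq0); rewrite -[LHS]/(psderiv _ k) phi_succ // (IH _ (inM_add hu inM_a0)).
rewrite -addrA -mulrS factS natrM exprS.
by field; rewrite fact_neq0 nat1r k1_neq0.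
Qed.

Lemma phi_rec t w q : (forall j, 0 <= t j) -> is_comb a t w ->
  t q * phiU w 0 + (l q)%:R * phiU (w + a q) 0 = 0.
Proof.
move=> t_ge0 hw; move: q; apply/(Dx_relationP _ (fun q => phiU (w + a q) 0) hw) => i.
by apply: phi_Dx_rel; apply/inMP; exists t.
Qed.

Lemma phi_gcoef w : inM C a w ->
  phiU w 0 = \sum_(b <- Benum C a) phiU b 0 * gcoef C a l b w.
Proof.
move=> hw; apply/eqP; rewrite -subr_eq0; apply/eqP; move: w hw.
apply: (cone_recursion_eq0
          (D := fun w => phiU w 0 - \sum_(b <- Benum C a) phiU b 0 * gcoef C a l b w)).
  move=> t w q t_ge0 hw; rewrite !mulrBr addrACA phi_rec // -opprD add0r.
  rewrite !mulr_sumr -big_split big_seq big1 ?oppr0 // => b /mem_Benum Hb /=.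
  by rewrite mulrCA [(l q)%:R * _]mulrCA -mulrDr gcoef_rec // mulr0.
move=> b Hb; have bB : b \in Benum C a by apply/mem_Benum.
rewrite (bigD1_seq b) ?Benum_uniq //= gcoef_self // mulr1 big_seq_cond big1 ?addr0 ?subrr //.
by move=> b' /andP[/mem_Benum Hb' nb']; rewrite (gcoef_other Hb' Hb) ?mulr0 // eq_sym.
Qed.

Lemma phi_span : exists (r : seq 'rV[int]_n) (c : 'rV[int]_n -> C),
  [/\ uniq r, (forall b, b \in r -> inB C a b) &
      forall s, inS a s -> forall k,
        phi s k = \sum_(b <- r) c b * xi (C:=C) a a0 l l0 b s k].
Proof.
exists (Benum C a), (fun b => phiU b 0).
split=> [|b /mem_Benum //|s hs k]; first exact: Benum_uniq.
rewrite phi_linext // -linext_lincomb; apply: eq_linext => u /hs hu j.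
rewrite phi_expand // phi_gcoef; last exact: inM_addMn.
by rewrite mulr_suml; apply: eq_bigr => b _; rewrite GserE mulrA.
Qed.

End Homomorphisms.

End Setting.

Theorem corollary3p18 (C : numClosedFieldType) (n m : nat)
  (a : 'I_m -> 'rV[int]_n) (a0 : 'rV[int]_n) (l : 'I_m -> nat) (l0 : nat) :
  lin_indep_real C a ->
  (forall j, (0 < l j)%N) -> (0 < l0)%N ->
  gcdn l0 (\big[gcdn/0%N]_(j < m) l j) = 1%N ->
  a0 *+ l0 = \sum_(j < m) a j *+ l j ->
  l0 = (\sum_(j < m) l j)%N ->
  (* each xi_b, b in B, vanishes on sum_i D_i S and is a D-module hom W -> C[[lambda]] *)
  (forall b, inB C a b -> isDhom (C:=C) a a0 l l0 (xi (C:=C) a a0 l l0 b)) /\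
  (* the xi_b, b in B, are C-linearly independent in Hom_D(W, C[[lambda]]) *)
  (forall (r : seq 'rV[int]_n) (c : 'rV[int]_n -> C),
      uniq r -> (forall b, b \in r -> inB C a b) ->
      (forall s : Lpoly C n, inS a s -> forall k,
          \sum_(b <- r) c b * xi (C:=C) a a0 l l0 b s k = 0) ->
      forall b, b \in r -> c b = 0) /\
  (* and they span Hom_D(W, C[[lambda]]) *)
  (forall phi : Lpoly C n -> pseries C, isDhom (C:=C) a a0 l l0 phi ->
      exists (r : seq 'rV[int]_n) (c : 'rV[int]_n -> C),
        [/\ uniq r, (forall b, b \in r -> inB C a b) &
            forall s : Lpoly C n, inS a s -> forall k,
              phi s k = \sum_(b <- r) c b * xi (C:=C) a a0 l l0 b s k]).
Proof.
move=> Hli Hl Hl0 _ Ha0 _; split; [|split].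
- by move=> b Hb; apply: xi_isDhom.
- exact: xi_lin_indep.
- by move=> phi Hphi; apply: phi_span.
Qed.
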